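(* Let $X$ be a Banach space and $k\in\mathbb{N}$, and assume $X$ admits a $k$-spreading model equivalent to the usual basis of $\ell^1$. Then for every $\varepsilon>0$ there exists a $k$-sequence $(y_s)_{s\in[\mathbb{N}]^k}$ in $X$ with $1-\varepsilon\le\|y_s\|\le1$ for all $s$, which generates a $k$-spreading model $(\widetilde e_n)_n$ satisfying $\|\sum_{i=1}^n a_i\widetilde e_i\|\ge(1-\varepsilon)\sum_{i=1}^n|a_i|$ for all $n$ and all reals $a_1,\dots,a_n$.
   Context: $[M]^k$: $k$-subsets of $M\subseteq\mathbb{N}$ (increasing enumerations, $M(l)$ the $l$-th element of $M$). A $k$-sequence in $X$ is a map $[\mathbb{N}]^k\to X$. Plegma family: $(s_j)_{j=1}^l$ in $[M]^k$ with $s_1(i)<\dots<s_l(i)$ ($i\le k$) and $s_l(i)<s_1(i+1)$ ($i<k$). $(x_s)_{s\in[M]^k}$ generates the Hamel basis $(e_n)$ of a seminormed space $(E,\|\cdot\|_* )$ as a $k$-spreading model if for a null sequence $\delta_l>0$: $|\|\sum_{j=1}^m a_jx_{s_j}\|-\|\sum_{j=1}^m a_je_j\|_*|\le\delta_l$ for all $m\le l$, plegma $(s_j)_{j=1}^m$ in $[M]^k$ with $s_1(1)\ge M(l)$, $a_j\in[-1,1]$. $X$ admits $(e_n)$ as a $k$-spreading model if some $k$-sequence in $X$ and some infinite $M$ generate it. *)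

From Stdlib Require Import Reals List Lra.
Open Scope R_scope.

Record SNSpace := {
  car :> Type;
  vzero : car;
  vadd : car -> car -> car;
  vopp : car -> car;
  vscal : R -> car -> car;
  snorm : car -> R;
  vadd_assoc : forall x y z, vadd x (vadd y z) = vadd (vadd x y) z;
  vadd_comm : forall x y, vadd x y = vadd y x;
  vadd_zero : forall x, vadd x vzero = x;
  vadd_opp : forall x, vadd x (vopp x) = vzero;
  vscal_one : forall x, vscal 1 x = x;
  vscal_assoc : forall a b x, vscal a (vscal b x) = vscal (a * b) x;
  vscal_distr_v : forall a x y, vscal a (vadd x y) = vadd (vscal a x) (vscal a y);
  vscal_distr_s : forall a b x, vscal (a + b) x = vadd (vscal a x) (vscal b x);
  snorm_triangle : forall x y, snorm (vadd x y) <= snorm x + snorm y;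
  snorm_homog : forall a x, snorm (vscal a x) = Rabs a * snorm x
}.

Arguments vzero {s}.
Arguments vadd {s}.
Arguments vopp {s}.
Arguments vscal {s}.
Arguments snorm {s}.

Definition is_banach (X : SNSpace) : Prop :=
  (forall x : X, snorm x = 0 -> x = vzero) /\
  (forall u : nat -> X,
     (forall eps, eps > 0 -> exists N, forall p q, (N <= p)%nat -> (N <= q)%nat ->
         snorm (vadd (u p) (vopp (u q))) < eps) ->
     exists x : X, forall eps, eps > 0 -> exists N, forall n, (N <= n)%nat ->
         snorm (vadd (u n) (vopp x)) < eps).

(** lincomb a v n = sum_{j=0}^{n-1} a_j v_j  (0-indexed: a_j here is a_{j+1} of the paper). *)
Fixpoint lincomb {X : SNSpace} (a : nat -> R) (v : nat -> X) (n : nat) : X :=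
  match n with
  | O => vzero
  | S n' => vadd (lincomb a v n') (vscal (a n') (v n'))
  end.

Fixpoint abssum (a : nat -> R) (n : nat) : R :=
  match n with
  | O => 0
  | S n' => abssum a n' + Rabs (a n')
  end.

Definition hamel_basis {E : SNSpace} (e : nat -> E) : Prop :=
  (forall (a : nat -> R) n, lincomb a e n = vzero -> forall j, (j < n)%nat -> a j = 0) /\
  (forall v : E, exists (a : nat -> R) n, v = lincomb a e n).

(** k-subsets of N: strictly increasing lists of length k; s(i) (1-indexed)
    is nth (i-1) s 0. A k-sequence in X is a map list nat -> X (only its
    values on k-subsets matter). *)
Definition kset (k : nat) (s : list nat) : Prop :=
  length s = k /\ forall i, (S i < k)%nat -> (nth i s 0 < nth (S i) s 0)%nat.

(** An infinite subset M of N, given by its increasing enumeration mM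
    (M(l) = mM (l-1)). *)
Definition incr_enum (mM : nat -> nat) : Prop := forall t, (mM t < mM (S t))%nat.

(** s_0, ..., s_{l-1} (paper: s_1..s_l) is a plegma family in [M]^k. *)
Definition plegma_in (k : nat) (mM : nat -> nat) (s : nat -> list nat) (l : nat) : Prop :=
  (forall j, (j < l)%nat -> kset k (s j) /\ forall x, In x (s j) -> exists t, mM t = x) /\
  (forall i j, (i < k)%nat -> (S j < l)%nat -> (nth i (s j) 0 < nth i (s (S j)) 0)%nat) /\
  (forall i, (S i < k)%nat -> (nth i (s (l - 1)%nat) 0 < nth (S i) (s 0%nat) 0)%nat).

Definition generates_ksm {X E : SNSpace} (k : nat) (x : list nat -> X) (mM : nat -> nat)
    (e : nat -> E) : Prop :=
  exists delta : nat -> R,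
    (forall l, delta l > 0) /\ Un_cv delta 0 /\
    forall (l m : nat) (s : nat -> list nat) (a : nat -> R),
      (1 <= l)%nat -> (1 <= m)%nat -> (m <= l)%nat ->
      plegma_in k mM s m ->
      (mM (l - 1)%nat <= nth 0 (s 0%nat) 0)%nat ->
      (forall j, (j < m)%nat -> -1 <= a j <= 1) ->
      Rabs (snorm (lincomb a (fun j => x (s j)) m) - snorm (lincomb a e m)) <= delta l.

Definition is_ksm {X E : SNSpace} (k : nat) (e : nat -> E) : Prop :=
  hamel_basis e /\
  exists (x : list nat -> X) (mM : nat -> nat), incr_enum mM /\ generates_ksm k x mM e.

Definition equiv_l1 {E : SNSpace} (e : nat -> E) : Prop :=
  exists c C, 0 < c /\ 0 < C /\ forall (a : nat -> R) n,
    c * abssum a n <= snorm (lincomb a e n) <= C * abssum a n.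

(* Let the k-sequence (x_s) generate, over M, a k-spreading model (e_j) with
   c * sum |a_j| <= ||sum a_j e_j||.  Let r be the best such lower constant,
   the infimum of ||sum a_j e_j|| over coefficient vectors with sum |a_j| = 1,
   and pick a = (a_0, ..., a_{n-1}) with sum |a_i| = 1 and
   rho := ||sum a_i e_i|| < (1 + eta) r.  For a k-set s let s^(i) be the k-set
   whose q-th element is M(n (s(q) + D) + i); the block vectors
   W_s = sum_i a_i x_{s^(i)} then form a k-sequence whose plegma families
   spread out into plegma families of the x's.  Consequently y_s = kappa W_s,
   kappa = 1 / ((1 + eta) rho), has norm in [1 - eps, 1] and generates the
   spreading model whose norm is ||sum_j b_j e~_j|| = kappa ||sum_{j,i} b_j a_i e_{jn+i}||,
   realised on finitely supported sequences; by the choice of r this norm is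
   at least kappa r sum |b_j| >= (1 - eps) sum |b_j|. *)

From Stdlib Require Import Reals List Lia Lra Arith.
From Stdlib Require Import Classical ClassicalEpsilon ProofIrrelevance FunctionalExtensionality.
Open Scope R_scope.

Lemma vadd_cancel {X : SNSpace} (x y : X) : vadd x y = x -> y = vzero.
Proof.
  intro H.
  transitivity (vadd (vadd y x) (vopp x)).
  - rewrite <- vadd_assoc, vadd_opp. symmetry. apply vadd_zero.
  - rewrite (vadd_comm X y x), H. apply vadd_opp.
Qed.

Lemma vscal_zero_l {X : SNSpace} (x : X) : vscal 0 x = vzero.
Proof.
  apply (vadd_cancel (vscal 0 x)).
  rewrite <- vscal_distr_s. f_equal. ring.
Qed.

Lemma vscal_zero_r {X : SNSpace} (c : R) : vscal c (@vzero X) = vzero.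
Proof.
  apply (vadd_cancel (vscal c vzero)).
  rewrite <- vscal_distr_v. now rewrite vadd_zero.
Qed.

Lemma vadd_zero_l {X : SNSpace} (x : X) : vadd vzero x = x.
Proof. rewrite vadd_comm. apply vadd_zero. Qed.

Lemma vadd4 {X : SNSpace} (a b c d : X) :
  vadd (vadd a b) (vadd c d) = vadd (vadd a c) (vadd b d).
Proof.
  rewrite <- !vadd_assoc. f_equal. rewrite !vadd_assoc. f_equal. apply vadd_comm.
Qed.

(* A seminorm is nonnegative: 0 = ||x - x|| <= 2 ||x||. *)
Lemma snorm_nonneg {X : SNSpace} (x : X) : 0 <= snorm x.
Proof.
  assert (Hzero : vscal 0 x = vadd x (vscal (-1) x)).
  { rewrite <- (vscal_one X x) at 2. rewrite <- vscal_distr_s. f_equal. ring. }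
  pose proof (snorm_triangle X x (vscal (-1) x)) as T.
  rewrite <- Hzero, !snorm_homog, Rabs_R0 in T.
  replace (Rabs (-1)) with 1 in T by (rewrite Rabs_left; lra). lra.
Qed.

Lemma lincomb_ext {X : SNSpace} (a b : nat -> R) (v w : nat -> X) n :
  (forall i, (i < n)%nat -> a i = b i) -> (forall i, (i < n)%nat -> v i = w i) ->
  lincomb a v n = lincomb b w n.
Proof.
  induction n; intros Ha Hv; simpl; auto.
  rewrite IHn by (intros; auto). rewrite Ha, Hv by lia. auto.
Qed.

Lemma lincomb_add_range {X : SNSpace} (a : nat -> R) (v : nat -> X) K n :
  lincomb a v (K + n) =
  vadd (lincomb a v K) (lincomb (fun i => a (K + i)%nat) (fun i => v (K + i)%nat) n).
Proof.
  induction n; simpl.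
  - rewrite Nat.add_0_r, vadd_zero. auto.
  - rewrite Nat.add_succ_r. simpl. rewrite IHn. apply eq_sym, vadd_assoc.
Qed.

Lemma lincomb_scal {X : SNSpace} c (a : nat -> R) (v : nat -> X) n :
  lincomb (fun i => c * a i) v n = vscal c (lincomb a v n).
Proof.
  induction n; simpl.
  - now rewrite vscal_zero_r.
  - rewrite IHn, vscal_distr_v, vscal_assoc. auto.
Qed.

Lemma lincomb_plus {X : SNSpace} (a b : nat -> R) (v : nat -> X) n :
  lincomb (fun i => a i + b i) v n = vadd (lincomb a v n) (lincomb b v n).
Proof.
  induction n; simpl.
  - now rewrite vadd_zero.
  - rewrite IHn, vscal_distr_s. apply vadd4.
Qed.

Lemma lincomb_vscal_vec {X : SNSpace} (b : nat -> R) c (v : nat -> X) m :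
  lincomb b (fun j => vscal c (v j)) m = vscal c (lincomb b v m).
Proof.
  induction m; simpl.
  - now rewrite vscal_zero_r.
  - rewrite IHm, vscal_distr_v, !vscal_assoc, Rmult_comm. auto.
Qed.

Lemma lincomb_zero_coef {X : SNSpace} (a : nat -> R) (v : nat -> X) n :
  (forall i, (i < n)%nat -> a i = 0) -> lincomb a v n = vzero.
Proof.
  induction n; intro H; simpl; auto.
  rewrite IHn by (intros; apply H; lia). rewrite H by lia.
  rewrite vscal_zero_l. apply vadd_zero.
Qed.

Lemma lincomb_stable {X : SNSpace} (a : nat -> R) (v : nat -> X) K K' :
  (forall p, (K <= p)%nat -> a p = 0) -> (K <= K')%nat -> lincomb a v K' = lincomb a v K.
Proof.
  intros H HK. replace K' with (K + (K' - K))%nat by lia.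
  rewrite lincomb_add_range, (lincomb_zero_coef (fun i => a (K + i)%nat)).
  - apply vadd_zero.
  - intros. apply H. lia.
Qed.

Lemma abssum_ext (a b : nat -> R) n :
  (forall i, (i < n)%nat -> Rabs (a i) = Rabs (b i)) -> abssum a n = abssum b n.
Proof.
  induction n; intro H; simpl; auto. rewrite IHn by (intros; auto). rewrite H by lia. auto.
Qed.

Lemma abssum_add_range (a : nat -> R) K n :
  abssum a (K + n) = abssum a K + abssum (fun i => a (K + i)%nat) n.
Proof.
  induction n; simpl.
  - rewrite Nat.add_0_r. ring.
  - rewrite Nat.add_succ_r. simpl. rewrite IHn. ring.
Qed.

Lemma abssum_scal c (a : nat -> R) n : abssum (fun i => c * a i) n = Rabs c * abssum a n.
Proof. induction n; simpl; [ring|]. rewrite IHn, Rabs_mult. ring. Qed.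

Lemma abssum_nonneg (a : nat -> R) n : 0 <= abssum a n.
Proof. induction n; simpl; [lra|]. pose proof (Rabs_pos (a n)). lra. Qed.

Lemma abs_le_abssum (a : nat -> R) n i : (i < n)%nat -> Rabs (a i) <= abssum a n.
Proof.
  induction n; intro H; simpl; [lia|].
  pose proof (Rabs_pos (a n)). pose proof (abssum_nonneg a n).
  destruct (Nat.eq_dec i n) as [->|Hne]; [lra|].
  assert (Rabs (a i) <= abssum a n) by (apply IHn; lia). lra.
Qed.

Definition blk (n : nat) (b a : nat -> R) (p : nat) : R := b (p / n)%nat * a (p mod n)%nat.

Lemma divmod_blk n j i : (i < n)%nat -> ((j * n + i) / n = j /\ (j * n + i) mod n = i)%nat.
Proof.
  intro H. split.
  - symmetry. apply (Nat.div_unique _ _ _ i); lia.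
  - symmetry. apply (Nat.mod_unique _ _ j); lia.
Qed.

Lemma decomp_blk n m p : (1 <= n)%nat -> (p < m * n)%nat ->
  exists j i, (i < n)%nat /\ (j < m)%nat /\ p = (j * n + i)%nat.
Proof.
  intros Hn Hp. exists (p / n)%nat, (p mod n)%nat.
  pose proof (Nat.div_mod_eq p n). pose proof (Nat.mod_upper_bound p n ltac:(lia)).
  split; [lia|]. split; [|lia].
  destruct (Nat.lt_ge_cases (p / n) m); auto. nia.
Qed.

Lemma lincomb_blk {X : SNSpace} n m (b a : nat -> R) (w : nat -> nat -> X) :
  (1 <= n)%nat ->
  lincomb (blk n b a) (fun p => w (p / n)%nat (p mod n)%nat) (m * n)
  = lincomb b (fun j => lincomb a (w j) n) m.
Proof.
  intro Hn. induction m; [simpl; auto|].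
  rewrite Nat.mul_succ_l, lincomb_add_range, IHm. simpl. f_equal.
  rewrite <- lincomb_scal. apply lincomb_ext; intros i Hi; unfold blk;
    destruct (divmod_blk n m i Hi) as [-> ->]; auto.
Qed.

Lemma abssum_blk n m (b a : nat -> R) :
  (1 <= n)%nat -> abssum (blk n b a) (m * n) = abssum b m * abssum a n.
Proof.
  intro Hn. induction m; [simpl; ring|].
  rewrite Nat.mul_succ_l, abssum_add_range, IHm. simpl.
  rewrite (abssum_ext (fun i => blk n b a (m * n + i)) (fun i => b m * a i)).
  - rewrite abssum_scal. ring.
  - intros i Hi; unfold blk; destruct (divmod_blk n m i Hi) as [-> ->]; auto.
Qed.

Lemma blk_bounded n m (b a : nat -> R) p :
  (1 <= n)%nat -> (p < m * n)%nat -> abssum a n = 1 ->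
  (forall j, (j < m)%nat -> -1 <= b j <= 1) -> -1 <= blk n b a p <= 1.
Proof.
  intros Hn Hp Ha Hb. destruct (decomp_blk n m p Hn Hp) as [j [i [Hi [Hj ->]]]].
  unfold blk. destruct (divmod_blk n j i Hi) as [-> ->].
  assert (Rabs (a i) <= 1) by (rewrite <- Ha; apply abs_le_abssum; auto).
  assert (Rabs (b j) <= 1) by (apply Rabs_le; auto).
  assert (HH : Rabs (b j * a i) <= 1).
  { rewrite Rabs_mult. pose proof (Rabs_pos (b j)); pose proof (Rabs_pos (a i)). nra. }
  pose proof (Rle_abs (b j * a i)). pose proof (Rle_abs (- (b j * a i))).
  rewrite Rabs_Ropp in *. lra.
Qed.

(** For an increasing enumeration M, the k-set s is sent to
    the k-set of elements M(n (s(q) + D) + i); as i ranges over [0, n) these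
    are the n copies of s used by one block vector. *)

Lemma incr_enum_lt (mM : nat -> nat) :
  incr_enum mM -> forall t1 t2, (t1 < t2)%nat -> (mM t1 < mM t2)%nat.
Proof.
  intros H t1 t2 Ht. induction t2; [lia|].
  destruct (Nat.eq_dec t1 t2) as [->|]; [apply H|].
  specialize (IHt2 ltac:(lia)). specialize (H t2). lia.
Qed.

Lemma incr_enum_le (mM : nat -> nat) :
  incr_enum mM -> forall t1 t2, (t1 <= t2)%nat -> (mM t1 <= mM t2)%nat.
Proof.
  intros H t1 t2 Ht. destruct (Nat.eq_dec t1 t2) as [->|]; [lia|].
  pose proof (incr_enum_lt mM H t1 t2 ltac:(lia)). lia.
Qed.

Definition shift_kset (mM : nat -> nat) (n D i : nat) (s : list nat) : list nat :=
  map (fun q => mM (n * (q + D) + i)%nat) s.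

Lemma nth_shift_kset mM n D i s r : (r < length s)%nat ->
  nth r (shift_kset mM n D i s) 0%nat = mM (n * (nth r s 0 + D) + i)%nat.
Proof.
  intro H. unfold shift_kset.
  rewrite (@nth_indep _ _ _ 0%nat (mM (n * (0 + D) + i)%nat)) by (rewrite length_map; auto).
  apply (map_nth (fun q => mM (n * (q + D) + i)%nat)).
Qed.

(* The hypotheses are those of [plegma_in] apart from membership in M. *)
Lemma plegma_shift_kset k mM n D m (s : nat -> list nat) :
  incr_enum mM -> (1 <= n)%nat -> (1 <= m)%nat ->
  (forall j, (j < m)%nat -> kset k (s j)) ->
  (forall i j, (i < k)%nat -> (S j < m)%nat -> (nth i (s j) 0 < nth i (s (S j)) 0)%nat) ->
  (forall i, (S i < k)%nat -> (nth i (s (m - 1)%nat) 0 < nth (S i) (s 0%nat) 0)%nat) ->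
  plegma_in k mM (fun p => shift_kset mM n D (p mod n) (s (p / n)%nat)) (m * n).
Proof.
  intros HM Hn Hm Hk Hcol Hwrap. split; [|split].
  - intros p Hp. destruct (decomp_blk n m p Hn Hp) as [j [i [Hi [Hj ->]]]].
    destruct (divmod_blk n j i Hi) as [-> ->].
    destruct (Hk j Hj) as [Hl Hinc]. split; [split|].
    + unfold shift_kset. rewrite length_map. auto.
    + intros r Hr. rewrite !nth_shift_kset by lia.
      apply (incr_enum_lt mM HM). specialize (Hinc r Hr). nia.
    + intros x Hx. unfold shift_kset in Hx.
      apply in_map_iff in Hx. destruct Hx as [q [<- _]]. eauto.
  - intros r p Hr Hp. destruct (decomp_blk n m p Hn ltac:(lia)) as [j [i [Hi [Hj ->]]]].
    destruct (divmod_blk n j i Hi) as [-> ->].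
    destruct (Hk j Hj) as [Hl _].
    destruct (Nat.lt_ge_cases (S i) n) as [Hc|Hc].
    + (* next copy of the same k-set *)
      replace (S (j * n + i)) with (j * n + S i)%nat by lia.
      destruct (divmod_blk n j (S i) Hc) as [-> ->].
      rewrite !nth_shift_kset by lia. apply (incr_enum_lt mM HM). lia.
    + (* first copy of the next k-set *)
      assert (Hj1 : (S j < m)%nat) by nia.
      replace (S (j * n + i)) with (S j * n + 0)%nat by nia.
      destruct (divmod_blk n (S j) 0 ltac:(lia)) as [-> ->].
      destruct (Hk (S j) Hj1) as [Hl' _].
      rewrite !nth_shift_kset by lia. apply (incr_enum_lt mM HM).
      specialize (Hcol r j Hr Hj1). nia.
  - intros r Hr.
    replace (m * n - 1)%nat with ((m - 1) * n + (n - 1))%nat by nia.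
    destruct (divmod_blk n (m - 1) (n - 1) ltac:(lia)) as [-> ->].
    rewrite Nat.Div0.div_0_l, Nat.Div0.mod_0_l.
    destruct (Hk (m - 1)%nat ltac:(lia)) as [Hl _].
    destruct (Hk 0%nat ltac:(lia)) as [Hl' _].
    rewrite !nth_shift_kset by lia. apply (incr_enum_lt mM HM).
    specialize (Hwrap r Hr). nia.
Qed.

(** The model space: finitely supported real sequences u, with the seminorm
    ||u|| = || sum_p u_{p/n} a_{p mod n} e_p || inherited from a block vector
    a = (a_0, ..., a_{n-1}) of the basis e of a seminormed space E. *)

Definition fin_supp (f : nat -> R) : Prop := exists N, forall p, (N <= p)%nat -> f p = 0.

Definition FinSeq := {f : nat -> R | fin_supp f}.

Lemma FinSeq_eq (u v : FinSeq) : (forall p, proj1_sig u p = proj1_sig v p) -> u = v.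
Proof.
  destruct u as [f hf], v as [g hg]; simpl; intro H.
  assert (f = g) by (apply functional_extensionality; auto). subst.
  f_equal. apply proof_irrelevance.
Qed.

Lemma fin_supp_zero : fin_supp (fun _ => 0).
Proof. exists 0%nat; auto. Qed.

Lemma fin_supp_add f g : fin_supp f -> fin_supp g -> fin_supp (fun p => f p + g p).
Proof. intros [N1 H1] [N2 H2]. exists (max N1 N2). intros p Hp. rewrite H1, H2 by lia. ring. Qed.

Lemma fin_supp_scal c f : fin_supp f -> fin_supp (fun p => c * f p).
Proof. intros [N1 H1]. exists N1. intros p Hp. rewrite H1 by lia. ring. Qed.

Definition fs_zero : FinSeq := exist _ _ fin_supp_zero.
Definition fs_add (u v : FinSeq) : FinSeq :=
  exist _ _ (fin_supp_add _ _ (proj2_sig u) (proj2_sig v)).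
Definition fs_scal c (u : FinSeq) : FinSeq := exist _ _ (fin_supp_scal c _ (proj2_sig u)).
Definition fs_opp (u : FinSeq) : FinSeq := fs_scal (-1) u.

Definition supp_bound (u : FinSeq) : nat :=
  proj1_sig (constructive_indefinite_description _ (proj2_sig u)).

Lemma supp_bound_spec (u : FinSeq) : forall p, (supp_bound u <= p)%nat -> proj1_sig u p = 0.
Proof. unfold supp_bound. destruct constructive_indefinite_description. auto. Qed.

Definition block_norm {E : SNSpace} (e : nat -> E) (n : nat) (a : nat -> R) (u : FinSeq) : R :=
  snorm (lincomb (blk n (proj1_sig u) a) e (supp_bound u * n)).

Lemma block_norm_any {E : SNSpace} (e : nat -> E) n a (u : FinSeq) N :
  (forall p, (N <= p)%nat -> proj1_sig u p = 0) ->
  block_norm e n a u = snorm (lincomb (blk n (proj1_sig u) a) e (N * n)).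
Proof.
  intro HN. unfold block_norm.
  destruct n as [|n']; [rewrite !Nat.mul_0_r; reflexivity|].
  set (B := max N (supp_bound u)).
  assert (Hfreeze : forall M, (M <= B)%nat -> (forall p, (M <= p)%nat -> proj1_sig u p = 0) ->
     lincomb (blk (S n') (proj1_sig u) a) e (M * S n')
     = lincomb (blk (S n') (proj1_sig u) a) e (B * S n')).
  { intros M HMB HM. symmetry. apply lincomb_stable; [|nia].
    intros p Hp. unfold blk. rewrite HM; [ring|].
    apply Nat.div_le_lower_bound; [lia|nia]. }
  rewrite (Hfreeze N ltac:(lia) HN), (Hfreeze (supp_bound u) ltac:(lia) (supp_bound_spec u)).
  reflexivity.
Qed.

Definition block_space {E : SNSpace} (e : nat -> E) (n : nat) (a : nat -> R) : SNSpace.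
Proof.
  refine (@Build_SNSpace FinSeq fs_zero fs_add fs_opp fs_scal (block_norm e n a)
            _ _ _ _ _ _ _ _ _ _);
    intros; try (apply FinSeq_eq; intro p; simpl; ring).
  - (* triangle inequality, computed with a common support bound *)
    set (N := max (supp_bound x) (supp_bound y)).
    rewrite !(block_norm_any e n a _ N).
    + rewrite (lincomb_ext _ (fun p => blk n (proj1_sig x) a p + blk n (proj1_sig y) a p) _ e)
        by (intros; unfold blk; simpl; ring || auto).
      rewrite lincomb_plus. apply snorm_triangle.
    + intros p Hp; apply supp_bound_spec; lia.
    + intros p Hp; apply supp_bound_spec; lia.
    + intros p Hp; simpl; rewrite !supp_bound_spec by lia; ring.
  -
    rewrite !(block_norm_any e n a _ (supp_bound x)).
    + rewrite (lincomb_ext _ (fun p => a0 * blk n (proj1_sig x) a p) _ e)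
        by (intros; unfold blk; simpl; ring || auto).
      rewrite lincomb_scal, snorm_homog. reflexivity.
    + apply supp_bound_spec.
    + intros p Hp; simpl; rewrite !supp_bound_spec by lia; ring.
Defined.

Definition unit_seq (j : nat) : FinSeq.
Proof.
  refine (exist _ (fun p => if Nat.eqb p j then 1 else 0) _).
  exists (S j). intros p Hp. destruct (Nat.eqb_spec p j); [lia|auto].
Defined.

Lemma unit_seq_lincomb {E : SNSpace} (e : nat -> E) n a (b : nat -> R) m p :
  proj1_sig (@lincomb (block_space e n a) b unit_seq m) p = if Nat.ltb p m then b p else 0.
Proof.
  induction m; simpl.
  - destruct (Nat.ltb_spec p 0); [lia|auto].
  - rewrite IHm. destruct (Nat.ltb_spec p m), (Nat.ltb_spec p (S m)), (Nat.eqb_spec p m);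
      try lia; subst; ring.
Qed.

Lemma unit_seq_hamel {E : SNSpace} (e : nat -> E) n a :
  @hamel_basis (block_space e n a) unit_seq.
Proof.
  split.
  - intros b m H j Hj. pose proof (f_equal (fun u : FinSeq => proj1_sig u j) H) as H'.
    simpl in H'. rewrite unit_seq_lincomb in H'. destruct (Nat.ltb_spec j m); [auto|lia].
  - intros v. exists (proj1_sig v), (supp_bound v). symmetry. apply FinSeq_eq. intro p.
    rewrite unit_seq_lincomb. destruct (Nat.ltb_spec p (supp_bound v)); auto.
    rewrite supp_bound_spec; auto.
Qed.

Lemma unit_seq_norm {E : SNSpace} (e : nat -> E) n a (b : nat -> R) m :
  (1 <= n)%nat ->
  @snorm (block_space e n a) (@lincomb (block_space e n a) b unit_seq m) =
  snorm (lincomb (blk n b a) e (m * n)).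
Proof.
  intro Hn. simpl. rewrite (block_norm_any e n a _ m).
  - f_equal. apply lincomb_ext; auto. intros p Hp. unfold blk.
    rewrite unit_seq_lincomb. destruct (Nat.ltb_spec (p / n) m); auto.
    exfalso. pose proof (Nat.div_mod_eq p n). pose proof (Nat.mod_upper_bound p n ltac:(lia)). nia.
  - intros p Hp. rewrite unit_seq_lincomb. destruct (Nat.ltb_spec p m); [lia|auto].
Qed.

Definition ksm_estimate {X E : SNSpace} (k : nat) (x : list nat -> X) (mM : nat -> nat)
    (e : nat -> E) (delta : nat -> R) : Prop :=
  forall (l m : nat) (s : nat -> list nat) (a : nat -> R),
    (1 <= l)%nat -> (1 <= m)%nat -> (m <= l)%nat ->
    plegma_in k mM s m ->
    (mM (l - 1)%nat <= nth 0 (s 0%nat) 0)%nat ->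
    (forall j, (j < m)%nat -> -1 <= a j <= 1) ->
    Rabs (snorm (lincomb a (fun j => x (s j)) m) - snorm (lincomb a e m)) <= delta l.

Lemma Un_cv_scaled_subseq (u : nat -> R) (phi : nat -> nat) c :
  Un_cv u 0 -> (forall L, (L <= phi L)%nat) -> Un_cv (fun L => c * u (phi L)) 0.
Proof.
  intros Hu Hphi eps Heps.
  destruct (Hu (eps / (Rabs c + 1))) as [N HN].
  { apply Rdiv_lt_0_compat; [lra|]. pose proof (Rabs_pos c). lra. }
  exists N. intros L HL. specialize (HN (phi L) ltac:(specialize (Hphi L); lia)).
  unfold R_dist in *. rewrite Rminus_0_r in *. rewrite Rabs_mult.
  pose proof (Rabs_pos c). pose proof (Rabs_pos (u (phi L))).
  apply (Rmult_lt_compat_l (Rabs c + 1)) in HN; [|lra].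
  replace ((Rabs c + 1) * (eps / (Rabs c + 1))) with eps in HN by (field; lra). nra.
Qed.

Lemma lincomb_blk_scal {E : SNSpace} (e : nat -> E) n c (b a : nat -> R) N :
  lincomb (blk n b (fun i => c * a i)) e N = vscal c (lincomb (blk n b a) e N).
Proof.
  rewrite <- lincomb_scal. apply lincomb_ext; auto. intros. unfold blk. ring.
Qed.

Section BlockVectors.

Variables (X E : SNSpace) (k : nat) (x : list nat -> X) (mM : nat -> nat) (e : nat -> E)
  (delta : nat -> R).
Hypothesis hk : (1 <= k)%nat.
Hypothesis HM : incr_enum mM.
Hypothesis Hgen : ksm_estimate k x mM e delta.

Variables (n D : nat) (a : nat -> R).
Hypothesis hn : (1 <= n)%nat.
Hypothesis Ha : abssum a n = 1.

Definition block_vec (s : list nat) : X := lincomb a (fun i => x (shift_kset mM n D i s)) n.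

(* A combination of block vectors over a plegma family is a combination of
   x's over the plegma family of shifted k-sets, so it is delta-close to the
   corresponding block combination of the e's. *)
Lemma block_estimate m (s : nat -> list nat) (b : nat -> R) l :
  (1 <= m)%nat ->
  (forall j, (j < m)%nat -> kset k (s j)) ->
  (forall i j, (i < k)%nat -> (S j < m)%nat -> (nth i (s j) 0 < nth i (s (S j)) 0)%nat) ->
  (forall i, (S i < k)%nat -> (nth i (s (m - 1)%nat) 0 < nth (S i) (s 0%nat) 0)%nat) ->
  (forall j, (j < m)%nat -> -1 <= b j <= 1) ->
  (1 <= l)%nat -> (m * n <= l)%nat -> (l - 1 <= (nth 0 (s 0%nat) 0 + D) * n)%nat ->
  Rabs (snorm (lincomb b (fun j => block_vec (s j)) m)
        - snorm (lincomb (blk n b a) e (m * n))) <= delta l.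
Proof.
  intros Hm Hks Hcol Hwrap Hb Hl Hml HD. unfold block_vec.
  rewrite <- (lincomb_blk n m b a (fun j i => x (shift_kset mM n D i (s j))) hn).
  apply (Hgen l (m * n)%nat (fun p => shift_kset mM n D (p mod n) (s (p / n)%nat))); auto.
  - nia.
  - apply plegma_shift_kset; auto.
  - rewrite Nat.Div0.div_0_l, Nat.Div0.mod_0_l.
    destruct (Hks 0%nat ltac:(lia)) as [Hlen _].
    rewrite nth_shift_kset by lia. apply (incr_enum_le mM HM). nia.
  - intros p Hp. apply (blk_bounded n m); auto.
Qed.

Lemma block_vec_norm (s : list nat) :
  (1 <= D)%nat -> kset k s ->
  Rabs (snorm (block_vec s) - snorm (lincomb a e n)) <= delta (D * n).
Proof.
  intros HD [Hlen Hinc].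
  pose proof (block_estimate 1 (fun _ => s) (fun _ => 1) (D * n)) as Hest.
  simpl in Hest. rewrite vadd_zero_l, vscal_one, Nat.add_0_r in Hest.
  rewrite (lincomb_ext (blk n (fun _ => 1) a) a _ e) in Hest.
  - apply Hest; try nia.
    + intros; split; auto.
    + exact Hinc.
    + intros; lra.
  - intros p Hp. unfold blk. rewrite Nat.mod_small by auto. ring.
  - auto.
Qed.

Lemma block_vec_generates (kap : R) :
  0 < kap -> (forall l, delta l > 0) -> Un_cv delta 0 ->
  @generates_ksm X (block_space e n (fun i => kap * a i)) k
    (fun s => vscal kap (block_vec s)) S unit_seq.
Proof.
  intros Hkap Hdp Hdc.
  exists (fun L => kap * delta ((L + D) * n)%nat). split; [|split].
  - intro L. apply Rmult_lt_0_compat; [lra|apply Hdp].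
  - apply Un_cv_scaled_subseq; auto. intro L. nia.
  - intros L m s b HL1 Hm1 HmL [Hp1 [Hcol Hwrap]] Hfirst Hb.
    rewrite unit_seq_norm, lincomb_vscal_vec, lincomb_blk_scal, !snorm_homog by auto.
    rewrite (Rabs_pos_eq kap) by lra.
    rewrite <- Rmult_minus_distr_l, Rabs_mult, (Rabs_pos_eq kap) by lra.
    apply Rmult_le_compat_l; [lra|].
    apply block_estimate; auto; try nia.
    intros j Hj; apply (Hp1 j Hj).
Qed.

End BlockVectors.

Lemma l1_optimal_constant {E : SNSpace} (e : nat -> E) (c : R) :
  0 < c -> (forall (a : nat -> R) n, c * abssum a n <= snorm (lincomb a e n)) ->
  exists r, 0 < r /\
    (forall (a : nat -> R) n, r * abssum a n <= snorm (lincomb a e n)) /\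
    forall eta, 0 < eta ->
      exists n (a : nat -> R), abssum a n = 1 /\ snorm (lincomb a e n) < (1 + eta) * r.
Proof.
  intros Hc Hlow.
  set (Neg := fun z => exists n (a : nat -> R), abssum a n = 1 /\ z = - snorm (lincomb a e n)).
  assert (Hbound : is_upper_bound Neg (- c)).
  { intros z [n [a [Ha ->]]]. specialize (Hlow a n). rewrite Ha in Hlow. lra. }
  assert (Hne : exists z, Neg z).
  { exists (- snorm (lincomb (fun _ => 1) e 1)), 1%nat, (fun _ => 1). split; auto.
    simpl. rewrite Rabs_R1. ring. }
  destruct (completeness Neg (ex_intro _ (- c) Hbound) Hne) as [m0 [Hub Hlub]].
  assert (Hnorm1 : forall n a, abssum a n = 1 -> - m0 <= snorm (lincomb a e n)).
  { intros n a Ha. assert (Neg (- snorm (lincomb a e n))) as Hz by (exists n, a; auto).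
    specialize (Hub _ Hz). lra. }
  assert (Hr : c <= - m0) by (specialize (Hlub _ Hbound); lra).
  exists (- m0). split; [lra|split].
  - (* homogeneity reduces to normalised coefficients *)
    intros b N. pose proof (abssum_nonneg b N) as Hs.
    destruct (Req_dec (abssum b N) 0) as [Hz|Hz].
    + rewrite Hz, Rmult_0_r. apply snorm_nonneg.
    + assert (Hinv : 0 < / abssum b N) by (apply Rinv_0_lt_compat; lra).
      assert (Hb1 : abssum (fun i => / abssum b N * b i) N = 1).
      { rewrite abssum_scal, Rabs_pos_eq by lra. field. auto. }
      specialize (Hnorm1 N _ Hb1).
      rewrite lincomb_scal, snorm_homog, Rabs_pos_eq in Hnorm1 by lra.
      apply (Rmult_le_compat_l (abssum b N)) in Hnorm1; [|lra].
      rewrite <- Rmult_assoc, Rinv_r, Rmult_1_l in Hnorm1 by auto. lra.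
  - (* otherwise -(1 + eta) r would be a smaller upper bound *)
    intros eta Heta. apply NNPP. intro Hnone.
    assert (Hub' : is_upper_bound Neg (- ((1 + eta) * - m0))).
    { intros z [n [a [Ha ->]]].
      destruct (Rlt_or_le (snorm (lincomb a e n)) ((1 + eta) * - m0)) as [Hlt|Hle]; [|lra].
      exfalso. apply Hnone. exists n, a. auto. }
    specialize (Hlub _ Hub'). nra.
Qed.

Lemma normalised_window eta rho w :
  0 < eta -> 0 < rho -> Rabs (w - rho) <= eta * rho ->
  1 - 2 * eta <= / ((1 + eta) * rho) * w <= 1.
Proof.
  intros Heta Hrho Hw.
  pose proof (Rle_abs (w - rho)). pose proof (Rle_abs (- (w - rho))). rewrite Rabs_Ropp in *.
  assert (Hk : / ((1 + eta) * rho) * ((1 + eta) * rho) = 1) by (field; lra).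
  assert (0 < / ((1 + eta) * rho)) by (apply Rinv_0_lt_compat; nra).
  split; nra.
Qed.

Lemma normalised_constant eta r rho :
  0 < eta -> 0 < r -> r <= rho -> rho < (1 + eta) * r -> 1 - 2 * eta <= / ((1 + eta) * rho) * r.
Proof.
  intros Heta Hr Hrrho Hrho.
  set (kap := / ((1 + eta) * rho)).
  assert (Hk : kap * ((1 + eta) * rho) = 1) by (unfold kap; field; lra).
  assert (Hkpos : 0 < kap) by (apply Rinv_0_lt_compat; nra).
  assert (Hgt : 1 < kap * r * ((1 + eta) * (1 + eta))) by nra.
  assert (Hsq : (1 - 2 * eta) * ((1 + eta) * (1 + eta)) <= 1) by nra.
  nra.
Qed.

(** With eta = eps / 2, choose a block a whose norm rho is within
    the factor 1 + eta of the optimal l^1 constant r, a shift D beyond which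
    the error delta is below eta rho, and normalise the block vectors by
    kappa = 1 / ((1 + eta) rho). *)
Theorem mainTheorem10 (X : SNSpace) (HX : is_banach X) (k : nat) (hk : (1 <= k)%nat) :
  (exists (E : SNSpace) (e : nat -> E), @is_ksm X E k e /\ equiv_l1 e) ->
  forall eps : R, eps > 0 ->
  exists (y : list nat -> X),
    (forall s, kset k s -> 1 - eps <= snorm (y s) <= 1) /\
    exists (E : SNSpace) (et : nat -> E) (mM : nat -> nat),
      hamel_basis et /\ incr_enum mM /\ generates_ksm k y mM et /\
      forall (n : nat) (a : nat -> R),
        snorm (lincomb a et n) >= (1 - eps) * abssum a n.
Proof.
  intros [E [e [[_ [x [mM [HM [delta [Hdp [Hdc Hgen]]]]]]] [c [C [hc [_ Heq]]]]]]] eps Heps.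
  set (eta := eps / 2).
  destruct (l1_optimal_constant e c hc (fun a n => proj1 (Heq a n)))
    as [r [Hr [Hlow Hattained]]].
  destruct (Hattained eta ltac:(unfold eta; lra)) as [n [a [Ha Hrho]]].
  assert (hn : (1 <= n)%nat) by (destruct n; [simpl in Ha; lra | lia]).
  set (rho := snorm (lincomb a e n)) in *.
  assert (Hrrho : r <= rho) by (specialize (Hlow a n); rewrite Ha in Hlow; fold rho in Hlow; lra).
  destruct (Hdc (eta * rho)) as [N0 HN0]; [unfold eta; nra|].
  assert (Hsmall : delta (S N0 * n)%nat <= eta * rho).
  { specialize (HN0 (S N0 * n)%nat ltac:(nia)). unfold R_dist in HN0.
    rewrite Rminus_0_r in HN0. pose proof (Rle_abs (delta (S N0 * n)%nat)). lra. }
  set (kap := / ((1 + eta) * rho)).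
  assert (Hkap : 0 < kap) by (apply Rinv_0_lt_compat; unfold eta; nra).
  replace (1 - eps) with (1 - 2 * eta) by (unfold eta; field).
  exists (fun s => vscal kap (block_vec X x mM n (S N0) a s)). split.
  - intros s Hs. rewrite snorm_homog, Rabs_pos_eq by lra.
    apply normalised_window; [unfold eta; lra | lra |].
    eapply Rle_trans; [apply (block_vec_norm X E k x mM e delta); auto; lia | exact Hsmall].
  - exists (block_space e n (fun i => kap * a i)), unit_seq, S.
    split; [apply unit_seq_hamel|]. split; [intro; lia|].
    split; [apply (block_vec_generates X E k x mM e delta); auto; lra|].
    intros m b. apply Rle_ge.
    rewrite unit_seq_norm, lincomb_blk_scal, snorm_homog, Rabs_pos_eq by (auto; lra).
    pose proof (Hlow (blk n b a) (m * n)%nat) as Hb.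
    rewrite abssum_blk, Ha, Rmult_1_r in Hb by auto.
    pose proof (normalised_constant eta r rho ltac:(unfold eta; lra) Hr Hrrho Hrho) as Hkr.
    fold kap in Hkr. pose proof (abssum_nonneg b m). nra.
Qed.
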